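(* If $(S,K,I)$ is a split graph and $C$ is an induced cycle in the factor graph $\Phi(S)$, then $|C|\leq 5$.
   Context: A split graph $(S,K,I)$ is a graph $S$ together with a fixed partition $V(S)=K\dot\cup I$, where $K$ is a clique and $I$ is an independent set. For a vertex $v$ of $S$, $N_v$ denotes its open neighborhood in $S$ and $d_v=|N_v|$; $\eta_{uv}=|N_u\cap N_v|$. The factor graph $\Phi(S)$ is the loopless multigraph with vertex set $I$ in which, for distinct $u,v\in I$, there is one edge joining $u$ and $v$ for each 2-switch of $S$ acting on $u$ and $v$ (a 2-switch replaces edges $ab,cd$ with $ac,bd$ when $ab,cd\in E(S)$ and $ac,bd\notin E(S)$); equivalently, the multiplicity of $uv$ is $\sigma_{uv}=(d_u-\eta_{uv})(d_v-\eta_{uv})$, and $u,v$ are adjacent iff $\sigma_{uv}>0$. An induced cycle $C=v_1\ldots v_nv_1$ ($n\geq 3$) in $\Phi(S)$ consists of distinct vertices with $v_iv_{i+1}$ and $v_nv_1$ adjacent and no other pair adjacent (multiplicities ignored); $|C|=n$ is its number of vertices. *)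

From mathcomp Require Import all_boot.
Set Implicit Arguments. Unset Strict Implicit. Unset Printing Implicit Defensive.

Section SplitGraph.
Variables (V : finType) (e : rel V).

Definition simple_graph : Prop := symmetric e /\ irreflexive e.

Definition split_graph (K I : {set V}) : Prop :=
  [/\ simple_graph,
      K :&: I = set0,
      K :|: I = [set: V],
      (forall x y, x \in K -> y \in K -> x != y -> e x y)
    & (forall x y, x \in I -> y \in I -> ~~ e x y)].

Definition nbhd (v : V) : {set V} := [set w | e v w].
Definition deg (v : V) : nat := #|nbhd v|.
Definition eta (u v : V) : nat := #|nbhd u :&: nbhd v|.

(* multiplicity of the edge uv in the factor graph Phi(S) *)
Definition sigma (u v : V) : nat := (deg u - eta u v) * (deg v - eta u v).

(* adjacency in Phi(S) (vertex set I, loopless, multiplicities ignored) *)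
Definition phi_adj (u v : V) : bool := (u != v) && (0 < sigma u v).

Definition phi_induced_cycle (I : {set V}) (s : seq V) : Prop :=
  [/\ 3 <= size s, uniq s, all (fun x => x \in I) s &
      forall x0 (i j : nat), i < size s -> j < size s -> i != j ->
        phi_adj (nth x0 s i) (nth x0 s j) =
        ((j == (i.+1) %% size s) || (i == (j.+1) %% size s))].

End SplitGraph.

(** Two vertices of [I] are joined in the factor graph exactly when their
    neighbourhoods are not nested, so the split structure plays no further
    role.  Suppose the induced cycle has at least six vertices and let [y] be
    one of maximum degree, with [u x y z w] the window of five consecutive
    vertices centred at [y]; write [N v] for the neighbourhood of [v].  If [N x] is contained in [N z], then [N x] lies
    in [N w] (the alternative [N w] in [N x] would nest [N w] in [N z]), and
    [N w] lies in [N y] because it is nested with it and not larger; hence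
    [N x] is contained in [N y], contradicting the edge [xy].  The case
    [N z] in [N x] is symmetric, going through [u]. *)
From mathcomp Require Import all_boot.
From mathcomp Require Import zify.

Set Implicit Arguments.
Unset Strict Implicit.
Unset Printing Implicit Defensive.

Section NestedSets.
Variable T : finType.
Implicit Types A B U X Y Z W : {set T}.

Definition nested A B := (A \subset B) || (B \subset A).

Lemma nested_sym A B : nested A B = nested B A.
Proof. by rewrite /nested orbC. Qed.

Lemma ltn_card_setI A B : (#|A :&: B| < #|A|) = ~~ (A \subset B).
Proof.
rewrite ltn_neqAle; have [-> ->] := subset_leqif_cards (subsetIl A B).
by rewrite andbT eqEsubset subsetIl subsetI subxx.
Qed.

Lemma nested_leq_card_subset A B : nested A B -> #|A| <= #|B| -> A \subset B.
Proof.
case/orP=> [// | sBA] leAB.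
by have /eqP <- : B == A by rewrite eqEcard sBA.
Qed.

Lemma nonnested_path_subset_contra X Y Z W :
  X \subset Z -> ~~ nested X Y -> ~~ nested Z W -> nested X W -> nested Y W ->
  #|W| <= #|Y| -> False.
Proof.
move=> sXZ nXY nZW XW YW leWY.
have sXW : X \subset W.
  case/orP: XW => // sWX.
  by case/negP: nZW; rewrite /nested (subset_trans sWX sXZ) orbT.
have sWY : W \subset Y by rewrite nested_leq_card_subset // nested_sym.
by case/negP: nXY; rewrite /nested (subset_trans sXW sWY).
Qed.

Lemma nonnested_path_center_not_max U X Y Z W :
  ~~ nested U X -> ~~ nested X Y -> ~~ nested Y Z -> ~~ nested Z W ->
  nested U Y -> nested U Z -> nested X Z -> nested X W -> nested Y W ->
  #|U| <= #|Y| -> #|W| <= #|Y| -> False.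
Proof.
move=> nUX nXY nYZ nZW UY UZ XZ XW YW leUY leWY.
case/orP: XZ => [sXZ | sZX].
- exact: (nonnested_path_subset_contra sXZ nXY nZW).
- by apply: (nonnested_path_subset_contra sZX _ _ _ _ leUY); rewrite nested_sym.
Qed.

End NestedSets.

Lemma phi_adjE (V : finType) (e : rel V) u v :
  phi_adj e u v = (u != v) && ~~ nested (nbhd e u) (nbhd e v).
Proof.
rewrite /phi_adj /sigma muln_gt0 /deg /eta !subn_gt0 ltn_card_setI.
by rewrite setIC ltn_card_setI negb_or.
Qed.

Section InducedCycle.
Variables (V : finType) (e : rel V) (I : {set V}) (s : seq V).
Hypothesis cycle_s : phi_induced_cycle e I s.
Local Notation n := (size s).

Lemma phi_induced_cycle_window x0 k a b : a.+1 < n -> b.+1 < n -> a != b ->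
  ~~ nested (nbhd e (nth x0 s ((k + a) %% n))) (nbhd e (nth x0 s ((k + b) %% n)))
  = (b == a.+1) || (a == b.+1).
Proof.
case: cycle_s => n3 uniq_s _ adj_s an bn ab.
have n0 : 0 < n by apply: leq_trans n3.
have ij : (k + a) %% n != (k + b) %% n by rewrite eqn_modDl !modn_small // ltnW.
have := adj_s x0 _ _ (ltn_pmod _ n0) (ltn_pmod _ n0) ij.
rewrite phi_adjE nth_uniq ?ltn_pmod // ij /= => ->.
have modS m : (m %% n).+1 %% n = m.+1 %% n by rewrite -addn1 modnDml addn1.
by rewrite !modS -!addnS !eqn_modDl !modn_small ?(ltnW an) ?(ltnW bn).
Qed.

End InducedCycle.

Theorem lemma3p1 (V : finType) (e : rel V) (K I : {set V}) (C : seq V) :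
  split_graph e K I -> phi_induced_cycle e I C -> size C <= 5.
Proof.
move=> _ cycC; rewrite leqNgt; apply/negP => n6.
have [y0 y0C] : exists y0, y0 \in C.
  by case: C {cycC} n6 => // y0 C' _; exists y0; exact: mem_head.
have [y yC ymax] := @arg_maxnP _ y0 (mem C) (deg e) y0C.
pose k := index y C + size C - 2.
pose N a := nbhd e (nth y C ((k + a) %% size C)).
have nonnestedN a b : a < 5 -> b < 5 -> a != b ->
    ~~ nested (N a) (N b) = (b == a.+1) || (a == b.+1).
  by move=> a5 b5; apply: (phi_induced_cycle_window cycC); lia.
have nestedN a b : a < 5 -> b < 5 -> a != b ->
    nested (N a) (N b) = ~~ ((b == a.+1) || (a == b.+1)).
  by move=> a5 b5 ab; rewrite -nonnestedN ?negbK.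
have N2 : N 2 = nbhd e y.
  rewrite /N /k subnK; last by lia.
  by rewrite modnDr modn_small ?index_mem // nth_index.
have leN a : #|N a| <= #|N 2|.
  by rewrite N2; apply: ymax; apply: mem_nth; rewrite ltn_pmod //; lia.
apply: (@nonnested_path_center_not_max _ (N 0) (N 1) (N 2) (N 3) (N 4));
  by rewrite ?nonnestedN ?nestedN ?leN.
Qed.
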